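(* Let $m$ and $n$ be positive integers. Then $$\binom{m+n-2}{m-1}\binom{n}{m}\binom{2n}{n}\equiv 0\pmod{m+n}.$$
   Context: Binomial coefficients $\binom{a}{b}$ are zero when $b<0$ or $b>a$ (for nonnegative integer $a$). *)

From mathcomp Require Import all_boot.

(** Counting subsets of subsets turns [C(2n,n) C(n,m)] into [C(2n,n-m) C(n+m,m)], so it suffices
    that [m + n] divides [C(m+n-2,m-1) C(m+n,m)].  As [m + n - 1] is coprime to [m + n], we may
    multiply by it, and two applications of [k C(k-1,j) = (k-j) C(k,j)] turn the product into
    [(m + n) C(m+n-1,m-1) C(m+n-1,m)]. *)
From mathcomp Require Import all_boot ring zify.

Lemma bin_subset k n p : k <= n <= p ->
  'C(p, n) * 'C(n, k) = 'C(p, k) * 'C(p - k, n - k).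
Proof.
case/andP=> le_kn le_np.
have facts_gt0 : 0 < k`! * (n - k)`! * (p - n)`! by rewrite !muln_gt0 !fact_gt0.
apply/eqP; rewrite -(eqn_pmul2r facts_gt0); apply/eqP.
have le_nk_pk : n - k <= p - k by lia.
have sub_sub : p - k - (n - k) = p - n by lia.
have lhs := bin_fact le_kn; have mid := bin_fact le_np.
have rhs := bin_fact (leq_trans le_kn le_np); have inner := bin_fact le_nk_pk.
rewrite sub_sub in inner.
transitivity ('C(p, n) * ('C(n, k) * (k`! * (n - k)`!)) * (p - n)`!); first by ring.
rewrite lhs -mulnA mid -rhs -inner; ring.
Qed.

Lemma bin_double_mul_bin m n : m <= n ->
  'C(n.*2, n) * 'C(n, m) = 'C(n.*2, n - m) * 'C(n + m, m).
Proof.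
move=> le_mn.
have le_n_2n : n <= n.*2 by rewrite -addnn leq_addr.
rewrite -(bin_sub le_mn) bin_subset ?leq_subr //.
by congr (_ * 'C(_, _)); lia.
Qed.

Lemma dvdn_bin_mul_bin a b : a + b + 2 %| 'C(a + b, a) * 'C(a + b + 2, a.+1).
Proof.
have coprime_pred : coprime (a + b + 2) (a + b + 1) by rewrite addn2 addn1 coprimeSn.
rewrite -(Gauss_dvdr _ coprime_pred) mulnA.
have lower : (a + b + 1) * 'C(a + b, a) = b.+1 * 'C(a + b + 1, a).
  have := mul_bin_down (a + b + 1) a.
  have -> : a + b + 1 - a = b.+1 by lia.
  by rewrite addn1.
have upper : b.+1 * 'C(a + b + 2, a.+1) = (a + b + 2) * 'C(a + b + 1, a.+1).
  have := mul_bin_down (a + b + 2) a.+1.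
  have -> : a + b + 2 - a.+1 = b.+1 by lia.
  by rewrite addn2 addn1 => ->.
by rewrite lower mulnAC upper -mulnA dvdn_mulr.
Qed.

Theorem theorem2 (m n : nat) (hm : 0 < m) (hn : 0 < n) :
  (m + n) %| 'C(m + n - 2, m - 1) * 'C(n, m) * 'C(n.*2, n).
Proof.
have [le_mn | lt_nm] := leqP m n; last by rewrite (bin_small lt_nm) muln0 mul0n dvdn0.
rewrite -mulnA [_ * 'C(n.*2, n)]mulnC bin_double_mul_bin // mulnCA dvdn_mull //.
case: m hm le_mn => // a _ _; case: n hn => // b _.
have -> : a.+1 + b.+1 = a + b + 2 by lia.
have -> : b.+1 + a.+1 = a + b + 2 by lia.
by rewrite addnK subn1; apply: dvdn_bin_mul_bin.
Qed.
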